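(* Let $X$ be a finite-dimensional real vector space and $\phi:X\to\mathbf{R}$ a strictly convex norm that is continuously differentiable on $X\setminus\{0\}$. Let $S=\partial\{z:\phi(z)\le1\}$, $\xi:X\setminus\{0\}\to S$, $\xi(x)=x/\phi(x)$, and $\pi(\eta)=\mathrm{D}\xi(\eta)\in\mathrm{Hom}(X,X)$ for $\eta\in S$. Let $0<\varepsilon<1$ and $$R=\sup\Bigl(\mathbf{R}\cap\bigl\{r:0<r<1,\ \text{and for all }\eta,\zeta\in S,\ \phi(\eta-\zeta)\le r\Rightarrow\|\pi(\eta)-\pi(\zeta)\|_\phi\le1-\varepsilon\bigr\}\Bigr).$$ Then for every $\eta\in S$ the map $\pi(\eta)$ restricted to $S\cap\{z:\phi(z-\eta)\le R\}$ is injective.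
   Context: A norm $\phi$ is strictly convex if $\phi(a+b)=\phi(a)+\phi(b)$ implies $\phi(b)a=\phi(a)b$. For $L\in\mathrm{Hom}(X,X)$, $\|L\|_\phi=\sup\{\phi(Lx):\phi(x)\le1\}$. *)

From HB Require Import structures.
From mathcomp Require Import all_boot all_order all_algebra.
From mathcomp Require Import all_classical all_reals all_analysis.
Set Implicit Arguments. Unset Strict Implicit. Unset Printing Implicit Defensive.
Import Order.TTheory GRing.Theory Num.Theory.
Import numFieldNormedType.Exports.
Local Open Scope classical_set_scope.
Local Open Scope ring_scope.

(* X = R^n, the model of an n-dimensional real vector space. *)
Notation vecX R n := ('rV[R]_n).

Definition fed_is_norm (R : realType) (n : nat) (phi : vecX R n -> R) : Prop :=
  [/\ forall x, phi x = 0 -> x = 0,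
      forall (c : R) x, phi (c *: x) = `|c| * phi x &
      forall x y, phi (x + y) <= phi x + phi y].

Definition fed_strictly_convex (R : realType) (n : nat) (phi : vecX R n -> R) : Prop :=
  forall a b, phi (a + b) = phi a + phi b -> phi b *: a = phi a *: b.

Definition fed_C1_off_zero (R : realType) (n : nat) (phi : vecX R n -> R) : Prop :=
  (forall x, x != 0 -> differentiable phi x) /\
  (forall v, {in [set x | x != 0], continuous (fun x => 'd phi x v)}).

(* the unit sphere S = boundary of {z | phi z <= 1} *)
Definition fed_sphere (R : realType) (n : nat) (phi : vecX R n -> R)
  : set (vecX R n) := [set z | phi z = 1].

Definition fed_xi (R : realType) (n : nat) (phi : vecX R n -> R) (x : vecX R n)
  : vecX R n := (phi x)^-1 *: x.

Definition fed_pi (R : realType) (n : nat) (phi : vecX R n -> R) (eta : vecX R n)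
  : vecX R n -> vecX R n := 'd (fed_xi phi) eta.

Definition fed_opnorm (R : realType) (n : nat) (phi : vecX R n -> R)
  (L : vecX R n -> vecX R n) : R :=
  sup [set phi (L x) | x in [set x | phi x <= 1]].

Definition fed_radius (R : realType) (n : nat) (phi : vecX R n -> R) (eps : R) : R :=
  sup [set r : R | 0 < r < 1 /\
        forall eta zeta, fed_sphere phi eta -> fed_sphere phi zeta ->
          phi (eta - zeta) <= r ->
          fed_opnorm phi (fun v => fed_pi phi eta v - fed_pi phi zeta v) <= 1 - eps].

From HB Require Import structures.
From mathcomp Require Import all_boot all_order all_algebra.
From mathcomp Require Import all_classical all_reals all_analysis.
From mathcomp Require Import ring lra.
Set Implicit Arguments.
Unset Strict Implicit.
Unset Printing Implicit Defensive.

Import Order.TTheory GRing.Theory Num.Theory.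
Import numFieldNormedType.Exports.
Local Open Scope classical_set_scope.
Local Open Scope ring_scope.

(** The differential of [phi] at a point of the sphere [S] is a supporting
    functional, so [pi eta v = v - (D phi eta v) eta]; hence [pi eta z1 = pi eta z2]
    forces [z1 = z2 + t eta], and if [t > 0] convexity of [phi] at [z2] gives
    [D phi z2 eta <= 0].  On the other hand, testing the bound
    [|| pi zeta - pi eta || <= 1 - eps] on the vector [eta] gives
    [D phi zeta eta >= eps] whenever [phi (eta - zeta)] is below an admissible
    radius.  Strict convexity lets one approach every [zeta] with
    [phi (eta - zeta) = R] by points of [S] strictly closer to [eta] (normalised
    points of the chord from [zeta] to [eta]), and continuity of [D phi] extends
    the bound to the closed ball of radius [R]. *)

(* Scaling as a bilinear map: [diff_bilin] then yields the product rule needed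
   to differentiate [fed_xi phi y = (phi y)^-1 *: y]. *)
Section ScaleBilinear.
Variables (R : realType) (n : nat).

Definition scalev (k : R) (v : 'rV[R]_n) : 'rV[R]_n := k *: v.

Lemma scalev_is_bilinear :
  bilinear_for
    (GRing.Scale.Law.clone _ _ *:%R _) (GRing.Scale.Law.clone _ _ *:%R _) scalev.
Proof.
split=> [u|k] a x y /=; rewrite /scalev.
- by rewrite scalerDl scalerA.
- by rewrite scalerDr !scalerA mulrC.
Qed.

HB.instance Definition _ :=
  bilinear_isBilinear.Build R R^o 'rV[R]_n 'rV[R]_n _ _ scalev scalev_is_bilinear.

End ScaleBilinear.

Section NormFacts.
Variables (R : realType) (n : nat) (phi : 'rV[R]_n -> R).
Hypothesis phi_norm : fed_is_norm phi.

Lemma normZ c x : phi (c *: x) = `|c| * phi x. Proof. by case: phi_norm. Qed.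
Lemma normD x y : phi (x + y) <= phi x + phi y. Proof. by case: phi_norm. Qed.

Lemma norm0 : phi 0 = 0.
Proof. by rewrite -(scale0r (0 : 'rV[R]_n)) normZ normr0 mul0r. Qed.

Lemma normN x : phi (- x) = phi x.
Proof. by rewrite -scaleN1r normZ normrN normr1 mul1r. Qed.

Lemma normZ_ge0 (c : R) x : 0 <= c -> phi (c *: x) = c * phi x.
Proof. by move=> c0; rewrite normZ ger0_norm. Qed.

Lemma normZ_sphere (c : R) x : phi x = 1 -> phi (c *: x) = `|c|.
Proof. by move=> x1; rewrite normZ x1 mulr1. Qed.

Lemma norm_ge0 x : 0 <= phi x.
Proof. by have := normD x (- x); rewrite subrr norm0 normN; lra. Qed.

Lemma norm_distC x y : phi (x - y) = phi (y - x).
Proof. by rewrite -normN opprB. Qed.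

Lemma norm_eq0 x : (phi x == 0) = (x == 0).
Proof.
apply/eqP/eqP => [|->]; last exact: norm0.
by case: phi_norm => + _ _; apply.
Qed.

Lemma sphere_neq0 x : phi x = 1 -> x != 0.
Proof. by move=> x1; rewrite -norm_eq0 x1 oner_neq0. Qed.

Lemma norm_convex x y (s : R) : 0 <= s -> s <= 1 ->
  phi ((1 - s) *: x + s *: y) <= (1 - s) * phi x + s * phi y.
Proof.
move=> s0 s1; apply: le_trans (normD _ _) _.
by rewrite !normZ_ge0 ?subr_ge0.
Qed.

Lemma diff_norm_le_sub x v : differentiable phi x ->
  'd phi x v <= phi (x + v) - phi x.
Proof.
move=> dx; rewrite -deriveE //.
set q := fun h : R => h^-1 *: (phi (h *: v + x) - phi x).
have q_right : q @ 0^'+ --> 'D_v phi x.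
  exact/cvg_dnbhs_at_right/(@diff_derivable _ _ _ _ _ v dx).
apply: (cvgr_to_le q_right); near=> h.
have h0 : 0 < h by near: h; exact: nbhs_right_gt.
have h1 : h <= 1 by near: h; apply: nbhs_right_le; exact: ltr01.
have hx : h *: v + x = (1 - h) *: x + h *: (x + v).
  by rewrite scalerDr scalerBl scale1r addrA subrK addrC.
have := norm_convex x (x + v) (ltW h0) h1.
rewrite -hx => hconv.
change (h^-1 * (phi (h *: v + x) - phi x) <= phi (x + v) - phi x).
by rewrite ler_pdivrMl //; lra.
Unshelve. all: by end_near. Qed.

Lemma diff_norm_self x : differentiable phi x -> 'd phi x x = phi x.
Proof.
move=> dx; have := diff_norm_le_sub x dx; have := diff_norm_le_sub (- x) dx.
rewrite subrr norm0 linearN /= -mulr2n -scaler_nat normZ_ge0 //; lra.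
Qed.

Lemma diff_norm_le x w : differentiable phi x -> phi x = 1 -> 'd phi x w <= phi w.
Proof. by move=> dx x1; have := diff_norm_le_sub w dx; have := normD x w; lra. Qed.

Lemma diff_norm_abs_le x w : differentiable phi x -> phi x = 1 ->
  `|'d phi x w| <= phi w.
Proof.
move=> dx x1; have := diff_norm_le w dx x1; have := diff_norm_le (- w) dx x1.
by rewrite linearN normN /= ler_norml => *; apply/andP; split; lra.
Qed.

Lemma fed_piE x v : differentiable phi x -> phi x = 1 ->
  fed_pi phi x v = v - 'd phi x v *: x.
Proof.
move=> dx x1.
have xiE : fed_xi phi = (fun q : R^o * 'rV[R]_n => scalev q.1 q.2) \o
                        (fun y => ((phi y)^-1, y)) by [].
have scalev_cont : continuous (fun q : R^o * 'rV[R]_n => scalev q.1 q.2).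
  exact: scale_continuous.
have dinv : differentiable (fun y => (phi y)^-1) x.
  by apply: differentiableV; rewrite ?x1 ?oner_neq0.
rewrite /fed_pi xiE diff_comp /=; last 2 first.
- by apply: differentiable_pair.
- exact: differentiable_bilin.
rewrite diff_pair // (diff_bilin _ scalev_cont) /= diffV ?x1 ?oner_neq0 //.
by rewrite /scalev /= diff_val expr1n invr1 scale1r scaleN1r scaleNr.
Qed.

Lemma diff_norm_sub_le x z (c : R) : differentiable phi x -> phi x = 1 ->
  1 - c * 'd phi x z <= phi (x - c *: z).
Proof.
move=> dx x1; have := diff_norm_le (x - c *: z) dx x1.
by rewrite linearB linearZ /= diff_norm_self // x1.
Qed.

Lemma diff_norm_gt0 x z : differentiable phi x -> phi x = 1 -> phi (x - z) < 1 ->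
  0 < 'd phi x z.
Proof.
move=> dx x1; have := diff_norm_sub_le z 1 dx x1.
by rewrite scale1r mul1r; lra.
Qed.

Lemma diff_norm_shift_le0 z e (t : R) : differentiable phi z ->
  phi (z + t *: e) = phi z -> 0 < t -> 'd phi z e <= 0.
Proof.
move=> dz zt t0; have := diff_norm_le_sub (t *: e) dz.
by rewrite zt subrr linearZ /= pmulr_rle0.
Qed.

Lemma norm_fed_xi x : x != 0 -> phi (fed_xi phi x) = 1.
Proof.
by rewrite -norm_eq0 => x0; rewrite normZ_ge0 ?invr_ge0 ?norm_ge0 ?mulVf.
Qed.

Lemma fed_opnorm_ge (L : 'rV[R]_n -> 'rV[R]_n) (C : R) x :
  (forall y, phi y <= 1 -> phi (L y) <= C) -> phi x <= 1 ->
  phi (L x) <= fed_opnorm phi L.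
Proof. by move=> LC x1; apply: ub_le_sup; [exists C => _ [y /LC ? <-]|exists x]. Qed.

Lemma fed_pi_self x : differentiable phi x -> phi x = 1 -> fed_pi phi x x = 0.
Proof. by move=> dx x1; rewrite fed_piE // diff_norm_self // x1 scale1r subrr. Qed.

Lemma fed_xi_cvg x : differentiable phi x -> x != 0 ->
  fed_xi phi y @[y --> x] --> fed_xi phi x.
Proof.
move=> dx x0; apply: (@cvgZ _ _ _ _ (nbhs_filter x)); last exact: cvg_id.
by apply: cvgV; [rewrite norm_eq0 | exact: differentiable_continuous].
Qed.

End NormFacts.

Section StrictConvexity.
Variables (R : realType) (n : nat) (phi : 'rV[R]_n -> R).
Hypotheses (phi_norm : fed_is_norm phi) (phi_strict : fed_strictly_convex phi).
Variables (eta z : 'rV[R]_n) (s : R).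
Hypotheses (eta1 : phi eta = 1) (z1 : phi z = 1).
Hypotheses (dist_gt0 : 0 < phi (eta - z)) (dist_le1 : phi (eta - z) <= 1).
Hypotheses (s_gt0 : 0 < s) (s_lt1 : s < 1).

Let w := z + s *: (eta - z).

Lemma norm_chord_gt : 1 - s * phi (eta - z) < phi w.
Proof.
move: (dist_gt0) (dist_le1); set d := eta - z; set rho := phi d => rho_gt0 rho_le1.
have z_split : z = w + - (s *: d) by rewrite /w addrK.
have sd : phi (- (s *: d)) = s * rho by rewrite (normN phi_norm) normZ_ge0 // ltW.
have := normD phi_norm w (- (s *: d)); rewrite -z_split z1 sd.
rewrite le_eqVlt => /orP[/eqP p_eq|]; last by lra.
(* Equality in the triangle inequality [z = w - s d] would force
   [eta = (1 - rho) z], which is not on the sphere. *)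
have := phi_strict (a := w) (b := - (s *: d)); rewrite -z_split z1 sd => /(_ p_eq).
have -> : phi w = 1 - s * rho by lra.
move/eqP; rewrite -subr_eq0.
have -> : (s * rho) *: w - (1 - s * rho) *: - (s *: d) = s *: (rho *: z + d).
  by apply/rowP => i; rewrite /w /d !mxE; ring.
rewrite scaler_eq0 (gt_eqF s_gt0) /= => /eqP zd0.
have : eta = (1 - rho) *: z + (rho *: z + d).
  by apply/rowP => i; rewrite /d !mxE; ring.
rewrite zd0 addr0 => eta_z.
by move: eta1; rewrite eta_z (normZ_ge0 phi_norm) ?subr_ge0 // z1; lra.
Qed.

Lemma fed_xi_chord_closer : w != 0 /\ phi (eta - fed_xi phi w) < phi (eta - z).
Proof.
have w_gt := norm_chord_gt.
have w_gt0 : 0 < phi w.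
  apply: le_lt_trans w_gt; rewrite subr_ge0 (@le_trans _ _ s) ?(ltW s_lt1) //.
  by rewrite ler_piMr // ltW.
have w_le1 : phi w <= 1.
  have w_conv : w = (1 - s) *: z + s *: eta.
    by apply/rowP => i; rewrite /w !mxE; ring.
  have := norm_convex phi_norm z eta (ltW s_gt0) (ltW s_lt1).
  by rewrite -w_conv z1 eta1 !mulr1 subrK.
split; first by rewrite -(norm_eq0 phi_norm) gt_eqF.
have -> : eta - fed_xi phi w = (1 - s) *: (eta - z) - ((phi w)^-1 - 1) *: w.
  rewrite /fed_xi; move: (phi w)^-1 => q.
  by apply/rowP => i; rewrite /w !mxE; ring.
apply: le_lt_trans (normD phi_norm _ _) _.
rewrite (normN phi_norm) !(normZ_ge0 phi_norm) ?subr_ge0 ?invf_ge1 ?(ltW s_lt1) //.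
have -> : ((phi w)^-1 - 1) * phi w = 1 - phi w by field; rewrite gt_eqF.
lra.
Qed.
End StrictConvexity.

Lemma le_of_le_mul_le1 (R : realFieldType) (e c a : R) :
  0 < e -> 0 < a -> a <= 1 -> e <= c * a -> e <= c.
Proof. by move=> e_gt0 a_gt0 a_le1 e_le; nra. Qed.

Section AdmissibleRadius.
Variables (R : realType) (n : nat) (phi : 'rV[R]_n -> R).
Hypothesis phi_norm : fed_is_norm phi.
Hypothesis phi_diff : forall x, x != 0 -> differentiable phi x.
Variable eps : R.
Hypotheses (eps_gt0 : 0 < eps) (eps_le1 : eps <= 1).

Let sphere_diff x : phi x = 1 -> differentiable phi x.
Proof. by move=> /(sphere_neq0 phi_norm)/phi_diff. Qed.

Definition fed_admissible (r : R) : Prop :=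
  0 < r < 1 /\ forall eta zeta, fed_sphere phi eta -> fed_sphere phi zeta ->
    phi (eta - zeta) <= r ->
    fed_opnorm phi (fun v => fed_pi phi eta v - fed_pi phi zeta v) <= 1 - eps.

Lemma fed_radiusE : fed_radius phi eps = sup fed_admissible.
Proof. by []. Qed.

Lemma fed_radius_le1 : fed_radius phi eps <= 1.
Proof.
rewrite fed_radiusE; have [Ane|/nonemptyPn->] := pselect (fed_admissible !=set0).
  by apply: ge_sup => // r [/andP[_ /ltW]].
by rewrite sup0 ler01.
Qed.

Lemma fed_pi_sub_le eta zeta v : phi eta = 1 -> phi zeta = 1 ->
  phi (fed_pi phi eta v - fed_pi phi zeta v) <= 2 * phi v.
Proof.
move=> eta1 zeta1.
rewrite (fed_piE _ (sphere_diff eta1) eta1) (fed_piE _ (sphere_diff zeta1) zeta1).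
rewrite opprB addrC addrA subrK.
apply: le_trans (normD phi_norm _ _) _.
rewrite (normN phi_norm _) !(normZ_sphere phi_norm) //.
apply: le_trans (lerD (diff_norm_abs_le phi_norm v (sphere_diff zeta1) zeta1)
                      (diff_norm_abs_le phi_norm v (sphere_diff eta1) eta1)) _.
lra.
Qed.

Lemma fed_pi_sub_self eta zeta : phi eta = 1 -> phi zeta = 1 ->
  fed_pi phi zeta eta - fed_pi phi eta eta = eta - 'd phi zeta eta *: zeta.
Proof.
move=> eta1 zeta1; rewrite (fed_pi_self phi_norm (sphere_diff eta1) eta1).
by rewrite (fed_piE _ (sphere_diff zeta1) zeta1) subr0.
Qed.

Lemma diff_ge_eps_admissible r eta zeta : fed_admissible r ->
  phi eta = 1 -> phi zeta = 1 -> phi (eta - zeta) <= r -> eps <= 'd phi zeta eta.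
Proof.
move=> [/andP[r_gt0 r_lt1] adm] eta1 zeta1 near_zeta.
have deta := sphere_diff eta1.
have far : phi (eta - 'd phi zeta eta *: zeta) <= 1 - eps.
  have bound y : phi y <= 1 -> phi (fed_pi phi zeta y - fed_pi phi eta y) <= 2.
    move=> y1; apply: le_trans (fed_pi_sub_le _ zeta1 eta1) _.
    by rewrite -[leRHS]mulr1 ler_wpM2l.
  have eta_le1 : phi eta <= 1 by rewrite [phi eta]eta1.
  rewrite -fed_pi_sub_self //; apply: le_trans (fed_opnorm_ge bound eta_le1) _.
  by apply: adm; rewrite // (norm_distC phi_norm).
have a_gt0 := diff_norm_gt0 phi_norm deta eta1 (le_lt_trans near_zeta r_lt1).
have a_le1 := diff_norm_le phi_norm zeta deta eta1; rewrite [phi zeta]zeta1 in a_le1.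
apply: (le_of_le_mul_le1 eps_gt0 a_gt0 a_le1).
have := le_trans (diff_norm_sub_le phi_norm zeta _ deta eta1) far.
by rewrite lerD2l lerN2.
Qed.

Lemma diff_ge_eps_lt_radius eta zeta : phi eta = 1 -> phi zeta = 1 ->
  phi (eta - zeta) < fed_radius phi eps -> eps <= 'd phi zeta eta.
Proof.
move=> eta1 zeta1; rewrite fed_radiusE => lt_sup.
have [Ane|/nonemptyPn A0] := pselect (fed_admissible !=set0); last first.
  by move: lt_sup; rewrite A0 sup0 ltNge (norm_ge0 phi_norm).
have [r adm_r lt_r] := sup_gt Ane lt_sup.
exact: diff_ge_eps_admissible adm_r eta1 zeta1 (ltW lt_r).
Qed.

Hypothesis phi_strict : fed_strictly_convex phi.
Hypothesis phi_diff_cont :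
  forall v, {in [set x | x != 0], continuous (fun x => 'd phi x v)}.

Lemma diff_ge_eps_le_radius eta z : phi eta = 1 -> phi z = 1 ->
  phi (eta - z) <= fed_radius phi eps -> eps <= 'd phi z eta.
Proof.
move=> eta1 z1 z_near; have [->|z_neq] := eqVneq z eta.
  apply: le_trans eps_le1 _.
  by rewrite (diff_norm_self phi_norm (sphere_diff eta1)) [phi eta]eta1.
have dist_gt0 : 0 < phi (eta - z).
  by rewrite lt0r (norm_ge0 phi_norm) andbT (norm_eq0 phi_norm) subr_eq0 eq_sym.
have dist_le1 := le_trans z_near fed_radius_le1.
pose zeta s := fed_xi phi (z + s *: (eta - z)).
have zeta_cvg : zeta s @[s --> 0^'+] --> z.
  have seg_cvg : z + s *: (eta - z) @[s --> 0^'+] --> z.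
    have : z + s *: (eta - z) @[s --> 0] --> z + 0 *: (eta - z).
      by apply: cvgD; [exact: cvg_cst | apply: cvgZ; [exact: cvg_id | exact: cvg_cst]].
    by rewrite scale0r addr0; exact: cvg_at_right_filter.
  have xi_z : fed_xi phi z = z by rewrite /fed_xi z1 invr1 scale1r.
  apply: cvg_comp seg_cvg _.
  by have := fed_xi_cvg phi_norm (sphere_diff z1) (sphere_neq0 phi_norm z1); rewrite xi_z.
have z_in : z \in [set x | x != 0].
  by apply/mem_set; have := sphere_neq0 phi_norm z1.
have d_cvg := cvg_comp _ _ zeta_cvg (@phi_diff_cont eta z z_in).
apply: (cvgr_to_ge d_cvg); near=> s.
have s_gt0 : 0 < s by near: s; exact: nbhs_right_gt.
have s_lt1 : s < 1 by near: s; apply: nbhs_right_lt; exact: ltr01.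
have [w_neq0 closer] :=
  fed_xi_chord_closer phi_norm phi_strict eta1 z1 dist_gt0 dist_le1 s_gt0 s_lt1.
exact: diff_ge_eps_lt_radius eta1 (norm_fed_xi phi_norm w_neq0) (lt_le_trans closer z_near).
Unshelve. all: by end_near. Qed.

Lemma sphere_shift_le0 eta z t : phi eta = 1 -> phi z = 1 ->
  phi (z + t *: eta) = 1 -> phi (z - eta) <= fed_radius phi eps -> t <= 0.
Proof.
move=> eta1 z1 zt1 z_near; rewrite leNgt; apply/negP => t_gt0.
have d_le0 :=
  diff_norm_shift_le0 phi_norm (sphere_diff z1) (etrans zt1 (esym z1)) t_gt0.
rewrite (norm_distC phi_norm) in z_near.
have := diff_ge_eps_le_radius eta1 z1 z_near.
by move=> /le_trans /(_ d_le0); rewrite leNgt eps_gt0.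
Qed.

End AdmissibleRadius.

Lemma eq_addZ_of_eq_subZ (R : ringType) (V : lmodType R) (x y e : V) (a b : R) :
  x - a *: e = y - b *: e -> x = y + (a - b) *: e.
Proof. by move/(congr1 (+%R^~ (a *: e))); rewrite subrK scalerBl addrA addrAC. Qed.

Theorem lemma3p6 (R : realType) (n : nat) (phi : 'rV[R]_n -> R) (eps : R) :
  fed_is_norm phi -> fed_strictly_convex phi -> fed_C1_off_zero phi ->
  0 < eps < 1 ->
  forall eta, fed_sphere phi eta ->
  {in (fed_sphere phi `&` [set z | phi (z - eta) <= fed_radius phi eps]) &,
     injective (fed_pi phi eta)}.
Proof.
move=> phi_norm phi_strict [phi_diff phi_diff_cont] /andP[eps_gt0 eps_lt1] eta eta1.
move=> z1 z2; rewrite !inE => -[z1S z1R] [z2S z2R].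
have deta := phi_diff _ (sphere_neq0 phi_norm eta1).
rewrite (fed_piE _ deta eta1) (fed_piE _ deta eta1) => /eq_addZ_of_eq_subZ.
set t := _ - _ => z1E.
have z2E : z2 = z1 + (- t) *: eta by rewrite z1E scaleNr addrK.
have shift_le0 := sphere_shift_le0 phi_norm phi_diff eps_gt0 (ltW eps_lt1)
  phi_strict phi_diff_cont eta1.
have t_le0 : t <= 0 by apply: shift_le0 z2S _ z2R; rewrite -z1E.
have Nt_le0 : - t <= 0 by apply: shift_le0 z1S _ z1R; rewrite -z2E.
have t0 : t = 0 by apply/le_anti; rewrite t_le0 -oppr_le0 Nt_le0.
by rewrite z1E t0 scale0r addr0.
Qed.
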